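(* Let $\mathcal O\subset\mathbb R^n$ be open and $g:\mathbb R^n\to\mathbb R$ positive. Let $w$ be a solution and $z$ a strict subsolution to the free boundary problem associated with $g$ in $\mathcal O$ (as defined in the context), with $w,z\in C(\overline{\mathcal O})$. If $w\ge z$ in $\overline{\mathcal O}$, then $w>z$ in $\mathcal O$. The analogous statement holds for strict supersolutions (with the inequalities reversed).
   Context: For a function $f$, $f^+:=|f|\chi_{\{f>0\}}$ and $f^-:=|f|\chi_{\{f<0\}}$. A solution to the free boundary problem associated to $g$ in $\mathcal O$ is a continuous $w$ with $w\in C^2(\{w>0\})\cap C^2(\{w<0\})$, $w\in C^1(\overline{\{w>0\}})\cap C^1(\overline{\{w<0\}})$, $\Delta w=0$ on $\{w\ne0\}\cap\mathcal O$, and $g(x)(w^+)_{\nu_x}(x)=-(w^-)_{\nu_x}(x)$ for $x\in\{w=0\}\cap\mathcal O$, where $\nu_x$ is the unit normal to $\{w=0\}$ at $x$ pointing into $\{w>0\}$. A strict subsolution to the free boundary problem associated with $g$ in $\mathcal O$ is $z\in C(\overline{\mathcal O})$ such that: $\{z=0\}$ is locally the graph of a $C^2$ function; $z\in C^1(\overline{\{z>0\}\cap\mathcal O})\cap C^1(\overline{\{z<0\}\cap\mathcal O})$; $\Delta z>0$ on $\{z\neq0\}$; and for $x_0\in\{z=0\}$, $g(x_0)(z^+)_{\nu_{x_0}}(x_0)+(z^-)_{\nu_{x_0}}(x_0)>0$, where $\nu_{x_0}$ is the inward unit normal at $x_0$ to $\{z>0\}$. A strict supersolution is defined analogously with the inequalities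 reversed ($\Delta z<0$ and the boundary quantity $<0$). *)

From HB Require Import structures.
From mathcomp Require Import all_boot all_order all_algebra.
From mathcomp Require Import all_classical all_reals all_analysis.
Set Implicit Arguments. Unset Strict Implicit. Unset Printing Implicit Defensive.
Import Order.TTheory GRing.Theory Num.Theory.
Import numFieldNormedType.Exports.
Local Open Scope classical_set_scope.
Local Open Scope ring_scope.

Section FreeBoundary.
Context {R : realType} {n : nat}.
Local Notation V := 'rV[R]_n.

Definition evec (i : 'I_n) : V := delta_mx 0 i.

(* Euclidean inner product (the normed structure on 'rV is the max norm,
   so unit vectors are expressed through the Euclidean inner product) *)
Definition dotv (u v : V) : R := \sum_(i < n) u 0 i * v 0 i.

Definition grad (f : V -> R) (x : V) : V := \row_i 'D_(evec i) f x.

Definition fpos (f : V -> R) (x : V) : R := if 0 < f x then `|f x| else 0.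
Definition fneg (f : V -> R) (x : V) : R := if f x < 0 then `|f x| else 0.

Definition posph (O : set V) (f : V -> R) : set V := O `&` [set x | 0 < f x].
Definition negph (O : set V) (f : V -> R) : set V := O `&` [set x | f x < 0].

Definition C1_on (f : V -> R) (A : set V) : Prop :=
  forall x, A x -> differentiable f x /\
    forall i, 'D_(evec i) f y @[y --> x] --> 'D_(evec i) f x.

Definition C2_on (f : V -> R) (A : set V) : Prop :=
  C1_on f A /\ forall i, C1_on ('D_(evec i) f) A.

Definition C1_closure (f : V -> R) (A : set V) (G : V -> V) : Prop :=
  C1_on f A /\ {within closure A, continuous f} /\
  {within closure A, continuous G} /\ (forall x, A x -> G x = grad f x).

Definition has_lap (f : V -> R) (x : V) : Prop :=
  forall i, (\forall y \near x, derivable f y (evec i)) /\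
            derivable ('D_(evec i) f) x (evec i).

Definition lap (f : V -> R) (x : V) : R :=
  \sum_(i < n) 'D_(evec i) ('D_(evec i) f) x.

(* nu is a unit normal at x to the hypersurface S (locally the zero set of a
   C^1 function psi with non-vanishing gradient parallel to nu) and it points
   into A: x + t nu lies in A for all small t > 0 *)
Definition normal_into (S A : set V) (x nu : V) : Prop :=
  dotv nu nu = 1 /\
  (exists (psi : V -> R) (U : set V), open U /\ U x /\ C1_on psi U /\
     (forall y, U y -> (S y <-> psi y = 0)) /\
     exists c : R, 0 < c /\ grad psi x = c *: nu) /\
  \forall t \near 0^'+, A (x + t *: nu).

Definition locally_C2_graph (S : set V) (x0 : V) : Prop :=
  exists e : V, dotv e e = 1 /\
  exists phi : V -> R, C2_on phi setT /\
    \forall x \near x0, (S x <-> dotv x e = phi (x - dotv x e *: e)).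

(* normal derivative (f^{+/-})_nu (x) of the function f^{+/-} whose gradient on the
   phase A extends continuously to G on closure A; outside closure A the function
   f^{+/-} vanishes identically near x, so its derivative is 0 *)
Definition nder (A : set V) (G : V -> V) (x nu : V) : R :=
  if `[< closure A x >] then dotv (G x) nu else 0.

Definition is_solution (g : V -> R) (O : set V) (w : V -> R) : Prop :=
  {within closure O, continuous w} /\
  C2_on w (posph O w) /\ C2_on w (negph O w) /\
  (forall x, O x -> w x != 0 -> lap w x = 0) /\
  exists Gp Gm : V -> V,
    C1_closure (fpos w) (posph O w) Gp /\ C1_closure (fneg w) (negph O w) Gm /\
    forall x, O x -> w x = 0 ->
      exists nu, normal_into [set y | w y = 0] [set y | 0 < w y] x nu /\
        g x * nder (posph O w) Gp x nu = - nder (negph O w) Gm x nu.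

Definition is_strict_subsolution (g : V -> R) (O : set V) (z : V -> R) : Prop :=
  {within closure O, continuous z} /\
  (forall x0, O x0 -> z x0 = 0 -> locally_C2_graph [set y | z y = 0] x0) /\
  (forall x, O x -> z x != 0 -> has_lap z x /\ 0 < lap z x) /\
  exists Gp Gm : V -> V,
    C1_closure (fpos z) (posph O z) Gp /\ C1_closure (fneg z) (negph O z) Gm /\
    forall x0, O x0 -> z x0 = 0 ->
      exists nu, normal_into [set y | z y = 0] [set y | 0 < z y] x0 nu /\
        0 < g x0 * nder (posph O z) Gp x0 nu + nder (negph O z) Gm x0 nu.

Definition is_strict_supersolution (g : V -> R) (O : set V) (z : V -> R) : Prop :=
  {within closure O, continuous z} /\
  (forall x0, O x0 -> z x0 = 0 -> locally_C2_graph [set y | z y = 0] x0) /\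
  (forall x, O x -> z x != 0 -> has_lap z x /\ lap z x < 0) /\
  exists Gp Gm : V -> V,
    C1_closure (fpos z) (posph O z) Gp /\ C1_closure (fneg z) (negph O z) Gm /\
    forall x0, O x0 -> z x0 = 0 ->
      exists nu, normal_into [set y | z y = 0] [set y | 0 < z y] x0 nu /\
        g x0 * nder (posph O z) Gp x0 nu + nder (negph O z) Gm x0 nu < 0.

End FreeBoundary.

(* Suppose the inequality is an equality at some x in O.  If z x <> 0, then z and w
   are twice differentiable near x and touch at x, so comparing second derivatives
   along the coordinate lines gives lap z x <= lap w x = 0 (resp. >=), against the
   strict sign of lap z.  If z x = 0 = w x, the free boundaries of both functions
   pass through x.  Near x each zero set is a hypersurface with the positive phase on
   the side of its normal nu, and the gradients of f^+ and f^- at x are a nu and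
   -b nu with a, b >= 0.  Comparing one-sided slopes of z^+ <= w^+ along nu_z and of
   w^- <= z^- along -nu_w, with p = <nu_z, nu_w> <= 1, yields
   g a_z <= g a_w p <= g a_w = b_w <= b_z p <= b_z, contradicting g a_z > b_z. *)

From HB Require Import structures.
From mathcomp Require Import all_boot all_order all_algebra.
From mathcomp Require Import all_classical all_reals all_analysis.
From mathcomp Require Import ring lra.
Import Order.TTheory GRing.Theory Num.Theory.
Import numFieldNormedType.Exports.
Local Open Scope classical_set_scope.
Local Open Scope ring_scope.
Set Implicit Arguments. Unset Strict Implicit. Unset Printing Implicit Defensive.

Section NormBalls.
Context {K : numFieldType} {W : pseudoMetricNormedZmodType K}.

Lemma nbhs_norm_ball (P : W -> Prop) (x : W) : (\forall y \near x, P y) ->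
  exists2 d : K, 0 < d & forall y, `|x - y| < d -> P y.
Proof. by move=> /nbhs_normP[d d0 hd]; exists d. Qed.

Lemma nbhs_norm_lt (x : W) (d : K) : 0 < d -> \forall y \near x, `|x - y| < d.
Proof. by move=> d0; apply/nbhs_ballP; exists d => // y; rewrite -ball_normE. Qed.

End NormBalls.

Section Dotv.
Context {R : realType} {n : nat}.
Local Notation V := 'rV[R]_n.

Lemma dotvC (u v : V) : dotv u v = dotv v u.
Proof. by apply: eq_bigr => i _; rewrite mulrC. Qed.

Lemma dotvDl (u v w : V) : dotv (u + v) w = dotv u w + dotv v w.
Proof. by rewrite /dotv -big_split; apply: eq_bigr => i _; rewrite mxE mulrDl. Qed.

Lemma dotvZl (a : R) (u w : V) : dotv (a *: u) w = a * dotv u w.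
Proof. by rewrite /dotv mulr_sumr; apply: eq_bigr => i _; rewrite mxE mulrA. Qed.

Lemma dotvNl (u w : V) : dotv (- u) w = - dotv u w.
Proof. by rewrite -scaleN1r dotvZl mulN1r. Qed.

Lemma dotvBl (u v w : V) : dotv (u - v) w = dotv u w - dotv v w.
Proof. by rewrite dotvDl dotvNl. Qed.

Lemma dotvZr (a : R) (u w : V) : dotv w (a *: u) = a * dotv w u.
Proof. by rewrite dotvC dotvZl dotvC. Qed.

Lemma dotvNr (u w : V) : dotv w (- u) = - dotv w u.
Proof. by rewrite dotvC dotvNl dotvC. Qed.

Lemma dotvDr (u v w : V) : dotv w (u + v) = dotv w u + dotv w v.
Proof. by rewrite dotvC dotvDl !(dotvC w). Qed.

Lemma dotvBr (u v w : V) : dotv w (u - v) = dotv w u - dotv w v.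
Proof. by rewrite dotvDr dotvNr. Qed.

Lemma dotvvN (u : V) : dotv (- u) (- u) = dotv u u.
Proof. by rewrite dotvNl dotvNr opprK. Qed.

Lemma dotv_ge0 (u : V) : 0 <= dotv u u.
Proof. by apply: sumr_ge0 => i _; rewrite -expr2 sqr_ge0. Qed.

Lemma dotv_unit_le1 (u v : V) : dotv u u = 1 -> dotv v v = 1 -> dotv u v <= 1.
Proof.
move=> u1 v1; have := dotv_ge0 (u - v).
by rewrite dotvBl !dotvBr u1 v1 (dotvC v u); lra.
Qed.

Lemma cvg_dotv {T : Type} (F : set_system T) {FF : Filter F} (G : T -> V) (a v : V) :
  (forall i, G t 0 i @[t --> F] --> a 0 i) -> dotv (G t) v @[t --> F] --> dotv a v.
Proof.
move=> Ga; rewrite /dotv; elim: (index_enum _) => [|i s IH].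
  by under eq_fun do rewrite big_nil; rewrite big_nil; exact: cvg_cst.
under eq_fun do rewrite big_cons; rewrite big_cons.
by apply: cvgD IH; apply: cvgMl.
Qed.

Lemma derive_dotv_grad (f : V -> R) x v : differentiable f x ->
  'D_v f x = dotv (grad f x) v.
Proof.
move=> df; rewrite deriveE // {1}(row_sum_delta v) linear_sum.
by apply: eq_bigr => i _; rewrite linearZ /= mxE -deriveE // mulrC.
Qed.

End Dotv.

Section Rays.
Context {R : realType} {n : nat}.
Local Notation V := 'rV[R]_n.

Definition ray_in (A : set V) (x v : V) : Prop := \forall t \near 0^'+, A (x + t *: v).

Lemma cvg_line (x v : V) : x + t *: v @[t --> (0 : R)] --> x.
Proof.
rewrite -[X in _ --> X]addr0 -(scale0r v).
by apply: cvgD; [exact: cvg_cst | apply: cvgZl; exact: cvg_id].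
Qed.

Lemma near_line (P : V -> Prop) (x v : V) :
  (\forall y \near x, P y) -> \forall t \near (0 : R), P (x + t *: v).
Proof. exact: cvg_line. Qed.

Lemma cvg_ray (x v : V) : x + t *: v @[t --> (0 : R)^'+] --> x.
Proof. exact/cvg_at_right_filter/cvg_line. Qed.

Lemma ray_nbhs (A : set V) (x v : V) : nbhs x A -> ray_in A x v.
Proof. exact: cvg_ray. Qed.

Lemma ray_inS (A B : set V) (x v : V) :
  (forall y, A y -> B y) -> ray_in A x v -> ray_in B x v.
Proof. by move=> AB; apply: filterS => t /AB. Qed.

Lemma ray_closure (A : set V) (x v : V) : ray_in A x v -> closure A x.
Proof.
move=> rA B /(ray_nbhs v) rB.
by have [t [At Bt]] := filter_ex (filterI rA rB); exists (x + t *: v).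
Qed.

Lemma cvg_ray_within (W : topologicalType) (A : set V) (h : V -> W) (x v : V) :
  {within closure A, continuous h} -> ray_in A x v ->
  h (x + t *: v) @[t --> (0 : R)^'+] --> h x.
Proof.
move=> hc rA; have /subspace_continuousP /(_ x (ray_closure rA)) hx := hc.
apply: cvg_trans hx => P /(ray_nbhs v) nP.
by apply: filterS2 rA nP => t At; apply; exact: subset_closure.
Qed.

Lemma near_at_right_itv (P : R -> Prop) : (\forall t \near (0 : R)^'+, P t) ->
  exists2 d, 0 < d & forall t, 0 < t < d -> P t.
Proof.
move=> /nbhs_ballP [d d0 hd]; exists d => // t /andP[t0 td]; apply: hd => //.
by rewrite -ball_normE /ball_ /= sub0r normrN gtr0_norm.
Qed.

Lemma is_derive_line (F : V -> R) (y v : V) (t : R) : derivable F (y + t *: v) v ->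
  is_derive t 1 (fun s => F (y + s *: v)) ('D_v F (y + t *: v)).
Proof.
move=> d.
have E : (fun h : R => h^-1 *: (((fun s => F (y + s *: v)) \o shift t) (h *: 1)
            - F (y + t *: v))) =
         (fun h => h^-1 *: ((F \o shift (y + t *: v)) (h *: v) - F (y + t *: v))).
  by apply: funext => h /=; rewrite -[h%:A]/(h * 1) mulr1 scalerDl addrCA.
by split; [rewrite /derivable E | rewrite /derive E].
Qed.

Lemma mvt_line (F : V -> R) (y v : V) (s t : R) : s < t ->
  (forall c, s <= c <= t -> differentiable F (y + c *: v)) ->
  exists2 c, s < c < t &
    F (y + t *: v) - F (y + s *: v) = dotv (grad F (y + c *: v)) v * (t - s).
Proof.
move=> st dF.
have dline c : s <= c <= t ->
    is_derive c 1 (fun c => F (y + c *: v)) (dotv (grad F (y + c *: v)) v).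
  move=> /dF dc; rewrite -derive_dotv_grad //.
  by apply: is_derive_line; exact: diff_derivable.
have cont : {within `[s, t], continuous (fun c => F (y + c *: v))}.
  apply: continuous_in_subspaceT => r; rewrite inE /= in_itv /= => rst.
  have [dr _] := dline r rst.
  exact/differentiable_continuous/derivable1_diffP.
have [c] := MVT st (fun c (hc : c \in `]s, t[) => dline c (subset_itv_oo_cc hc)) cont.
by rewrite in_itv /=; exists c.
Qed.

Lemma cvg_ray_slope (F : V -> R) (A : set V) (G : V -> V) (x v : V) :
  C1_closure F A G -> F x = 0 -> ray_in A x v ->
  t^-1 * F (x + t *: v) @[t --> (0 : R)^'+] --> dotv (G x) v.
Proof.
move=> [C1F [Fc [Gc GF]]] Fx rA; set D := dotv (G x) v.
have FD : F (x + s *: v) - s * D @[s --> (0 : R)^'+] --> 0 - 0 * D.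
  apply: cvgB; first by rewrite -[X in _ --> X]Fx; exact: cvg_ray_within Fc rA.
  by apply: cvgMl; apply: cvg_at_right_filter; exact: cvg_id.
have /cvgrPdist_le GD : dotv (G (x + t *: v)) v @[t --> (0 : R)^'+] --> D.
  apply: cvg_dotv => i.
  exact: cvg_comp (cvg_ray_within Gc rA) (@coord_continuous R _ _ 0 i (G x)).
apply/cvgrPdist_le => e e0.
have [d d0 near_d] := near_at_right_itv (filterI rA (GD e e0)).
near=> t.
have t0 : 0 < t by near: t; exact: nbhs_right_gt.
have td : t < d by near: t; exact: nbhs_right_lt.
(* By the mean value theorem on [s, t], then let s -> 0+. *)
have incr : \forall s \near (0 : R)^'+,
    `|(F (x + t *: v) - t * D) - (F (x + s *: v) - s * D)| <= e * t.
  near=> s.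
  have s0 : 0 < s by near: s; exact: nbhs_right_gt.
  have st : s < t by near: s; exact: nbhs_right_lt.
  have good c : s <= c <= t -> A (x + c *: v) /\ `|D - dotv (G (x + c *: v)) v| <= e.
    by move=> /andP[sc ct]; apply: near_d; apply/andP; split; lra.
  have [c /andP[sc ct] E] := mvt_line st (fun c hc => (C1F _ (good c hc).1).1).
  have /good[Ac Dc] : s <= c <= t by rewrite !ltW.
  have -> : F (x + t *: v) - t * D - (F (x + s *: v) - s * D) =
      (dotv (G (x + c *: v)) v - D) * (t - s) by rewrite mulrBl GF // -E; ring.
  rewrite normrM distrC (@gtr0_norm _ (t - s)); last lra.
  have : `|D - dotv (G (x + c *: v)) v| * (t - s) <= e * (t - s).
    by rewrite ler_pM2r ?subr_gt0.
  nra.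
have : `|F (x + t *: v) - t * D - (0 - 0 * D)| <= e * t.
  exact: ler_cvg_to (cvg_norm (cvgB (cvg_cst _) FD)) (cvg_cst _) incr.
rewrite mul0r !subr0 => bound.
have -> : D - t^-1 * F (x + t *: v) = t^-1 * (t * D - F (x + t *: v)).
  by field; rewrite gt_eqF.
rewrite normrM gtr0_norm ?invr_gt0 // distrC -(ler_pM2l t0) mulrA mulfV ?gt_eqF //.
by rewrite mul1r [t * e]mulrC.
Unshelve. all: by end_near.
Qed.

Lemma ray_slope_le (F1 F2 : V -> R) (A1 A2 : set V) (G1 G2 : V -> V) (x v : V) :
  C1_closure F1 A1 G1 -> C1_closure F2 A2 G2 -> F1 x = 0 -> F2 x = 0 ->
  ray_in A1 x v -> (forall y, A1 y -> A2 y) -> (forall y, A1 y -> F1 y <= F2 y) ->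
  dotv (G1 x) v <= dotv (G2 x) v.
Proof.
move=> C1 C2 F1x F2x r1 A12 F12; have r2 : ray_in A2 x v := ray_inS A12 r1.
apply: ler_cvg_to (cvg_ray_slope C1 F1x r1) (cvg_ray_slope C2 F2x r2) _.
near=> t; rewrite ler_pM2l ?invr_gt0; first by apply: F12; near: t.
by near: t; exact: nbhs_right_gt.
Unshelve. all: by end_near.
Qed.

Lemma ray_slope_ge0 (F : V -> R) (A : set V) (G : V -> V) (x v : V) :
  C1_closure F A G -> F x = 0 -> ray_in A x v -> (forall y, 0 <= F y) ->
  0 <= dotv (G x) v.
Proof.
move=> C1 Fx rA F0; apply: ler_cvg_to (cvg_cst 0) (cvg_ray_slope C1 Fx rA) _.
by near=> t; rewrite mulr_ge0 // invr_ge0 ltW //; near: t; exact: nbhs_right_gt.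
Unshelve. all: by end_near.
Qed.

Lemma ray_derive_gt0 (psi : V -> R) (x v : V) : derivable psi x v -> psi x = 0 ->
  0 < 'D_v psi x -> ray_in [set y | 0 < psi y] x v.
Proof.
move=> dv px Dv.
have /cvg_dnbhs_at_right/cvgr_gt/(_ 0 Dv) :
    (fun h : R => h^-1 *: ((psi \o shift x) (h *: v) - psi x)) @ 0^' --> 'D_v psi x := dv.
apply: filterS2 (@nbhs_right_gt R 0) => t t0 /=.
by rewrite px subr0 addrC pmulr_rgt0 // invr_gt0.
Qed.

Lemma ray_derive_lt0 (psi : V -> R) (x v : V) : derivable psi x v -> psi x = 0 ->
  'D_v psi x < 0 -> ray_in [set y | psi y < 0] x v.
Proof.
move=> dv px Dv.
have /cvg_dnbhs_at_right/cvgr_lt/(_ 0 Dv) :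
    (fun h : R => h^-1 *: ((psi \o shift x) (h *: v) - psi x)) @ 0^' --> 'D_v psi x := dv.
apply: filterS2 (@nbhs_right_gt R 0) => t t0 /=.
by rewrite px subr0 addrC pmulr_rlt0 // invr_gt0.
Qed.

End Rays.

Section Segments.
Context {R : realType} {n : nat}.
Local Notation V := 'rV[R]_n.

Lemma ivt_segment_pos (h : V -> R) (p q : V) :
  (forall l : R, 0 <= l <= 1 ->
     h (p + l *: (q - p)) != 0 /\ {for p + l *: (q - p), continuous h}) ->
  0 < h p -> 0 < h q.
Proof.
move=> hseg hp; rewrite ltNge; apply/negP => hq.
have cont : {within `[0, 1], continuous (fun l : R => h (p + l *: (q - p)))}.
  apply: continuous_in_subspaceT => l; rewrite inE /= in_itv /= => l01.
  have line : {for l, continuous (fun l : R => p + l *: (q - p))}.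
    by apply: continuousD; [exact: cst_continuous | exact: continuousZl].
  exact: continuous_comp line (hseg l l01).2.
have [l] : exists2 l, l \in `[(0 : R), 1] & h (p + l *: (q - p)) = 0.
  apply: IVT => //; rewrite scale0r addr0 scale1r addrC subrK.
  by rewrite ge_min le_max; apply/andP; split; apply/orP; [right | left]; lra.
by rewrite in_itv /= => /hseg[/eqP].
Qed.

Lemma ball_convex (x y1 y2 : V) (d l : R) : `|x - y1| < d -> `|x - y2| < d ->
  0 <= l <= 1 -> `|x - (y1 + l *: (y2 - y1))| < d.
Proof.
move=> h1 h2 /andP[l0 l1].
have -> : x - (y1 + l *: (y2 - y1)) = (1 - l) *: (x - y1) + l *: (x - y2).
  by apply/matrixP => i j; rewrite !mxE; ring.
apply: le_lt_trans (ler_normD _ _) _; rewrite !normrZ !ger0_norm; try lra.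
have le1 : (1 - l) * `|x - y1| <= (1 - l) * d by apply: ler_wpM2l; lra.
have [l_gt0|l_le0] := ltP 0 l.
  have : l * `|x - y2| < l * d by rewrite ltr_pM2l.
  lra.
have -> : l = 0 by lra.
by rewrite mul0r addr0 subr0 mul1r.
Qed.

Lemma dist_shift (x y m : V) (s : R) : 0 <= s ->
  `|x - (y + s *: m)| <= `|x - y| + s * `|m|.
Proof.
move=> s0; rewrite opprD addrA; apply: le_trans (ler_normD _ _) _.
by rewrite normrN normrZ ger0_norm.
Qed.

Lemma line_grad_ge (psi : V -> R) (x m : V) (r k : R) :
  (forall y, `|x - y| < r -> differentiable psi y /\ k <= dotv (grad psi y) m) ->
  forall y s, 0 <= s -> `|x - y| + s * `|m| < r -> psi y + k * s <= psi (y + s *: m).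
Proof.
move=> hr y s s0 hs; have [s_gt0|s_le0] := ltP 0 s; last first.
  have -> : s = 0 by lra.
  by rewrite scale0r addr0 mulr0 addr0.
have near_y c : 0 <= c <= s -> `|x - (y + c *: m)| < r.
  move=> /andP[c0 cs]; apply: le_lt_trans (dist_shift _ _ _ c0) _.
  by apply: le_lt_trans hs; rewrite lerD2l; apply: ler_wpM2r.
have [c /andP[c0 cs]] := mvt_line s_gt0 (fun c hc => (hr _ (near_y c hc)).1).
rewrite scale0r addr0 subr0 => E.
have /near_y/hr[_ kc] : 0 <= c <= s by rewrite !ltW.
nra.
Qed.

Lemma pos_transport (f : V -> R) (B Q : set V) (v : V) :
  (forall y1 y2 l, B y1 -> B y2 -> 0 <= l <= 1 -> B (y1 + l *: (y2 - y1))) ->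
  (forall y, B y -> Q y -> forall l : R, 0 <= l <= 1 ->
     f (y + l *: v) != 0 /\ {for y + l *: v, continuous f}) ->
  (forall m, B m -> f (m + v) != 0 /\ {for m + v, continuous f}) ->
  forall y1 y2, B y1 -> B y2 -> Q y1 -> Q y2 -> 0 < f y1 -> 0 < f y2.
Proof.
move=> Bc hv hm y1 y2 B1 B2 Q1 Q2 f1.
have f1v : 0 < f (y1 + v).
  apply: (ivt_segment_pos (p := y1)) f1 => l l01.
  by rewrite [y1 + v]addrC addrK; apply: hv.
have f2v : 0 < f (y2 + v).
  apply: (ivt_segment_pos (p := y1 + v)) f1v => l l01.
  have -> : y1 + v + l *: (y2 + v - (y1 + v)) = (y1 + l *: (y2 - y1)) + v.
    by apply/matrixP => i j; rewrite !mxE; ring.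
  by apply: hm; apply: Bc.
apply: (ivt_segment_pos (p := y2 + v)) f2v => l l01.
have -> : y2 + v + l *: (y2 - (y2 + v)) = y2 + (1 - l) *: v.
  by apply/matrixP => i j; rewrite !mxE; ring.
by apply: hv => //; lra.
Qed.

End Segments.

Section LocalPhases.
Context {R : realType} {n : nat}.
Local Notation V := 'rV[R]_n.
Variables (O U : set V) (f psi : V -> R) (x0 nu : V) (c : R).
Hypotheses (oO : open O) (f_cont : forall x, O x -> {for x, continuous f})
  (oU : open U) (Ox0 : O x0) (Ux0 : U x0) (C1psi : C1_on psi U)
  (zero_psi : forall y, U y -> (f y = 0 <-> psi y = 0))
  (c_gt0 : 0 < c) (grad_psi : grad psi x0 = c *: nu) (fx0 : f x0 = 0).

Let psi_x0 : psi x0 = 0. Proof. exact/(zero_psi Ux0). Qed.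

Lemma normal_slope_near (nu1 : dotv nu nu = 1) : \forall y \near x0,
  [/\ O y, U y, differentiable psi y & c / 2 <= dotv (grad psi y) nu].
Proof.
have Unear : \forall y \near x0, U y by exact: open_nbhs_nbhs.
have slope : dotv (grad psi y) nu @[y --> x0] --> c.
  have -> : c = dotv (grad psi x0) nu by rewrite grad_psi dotvZl nu1 mulr1.
  apply: (@cvg_dotv _ _ _ (nbhs x0) _) => i.
  by rewrite mxE; under eq_fun do rewrite mxE; exact: (C1psi Ux0).2.
near=> y; split; last 1 first.
- by apply: ltW; near: y; apply: (cvgr_gt c slope (c / 2)); have := c_gt0; lra.
- by near: y; exact: open_nbhs_nbhs.
- by near: y.
- by apply: (C1psi _).1; near: y.
Unshelve. all: by end_near.
Qed.

Section Ball.
Variables (r S del : R).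
Hypotheses (r_ball : forall y, `|x0 - y| < r ->
    [/\ O y, U y, differentiable psi y & c / 2 <= dotv (grad psi y) nu])
  (S_gt0 : 0 < S) (S_nu : S * `|nu| <= r / 4)
  (del_ball : forall y, `|x0 - y| < del -> `|x0 - y| < r / 4 /\ `|psi y| < c * S / 4).

Let good y : `|x0 - y| < r -> psi y != 0 -> f y != 0 /\ {for y, continuous f}.
Proof.
move=> /r_ball[Oy Uy _ _] py; split; last exact: f_cont.
by apply: contra py => /eqP/(zero_psi Uy) ->.
Qed.

Lemma signed_psi_grows (sg : R) : `|sg| = 1 -> forall y s, 0 <= s ->
  `|x0 - y| + 2 * s * `|nu| < r -> sg * psi y + c / 2 * s <= sg * psi (y + s *: (sg *: nu)).
Proof.
have grows := line_grad_ge (fun y hy => let: And4 _ _ dy sy := r_ball hy in conj dy sy).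
move=> /eqP; rewrite eqr_norml ler01 andbT => /orP[]/eqP -> y s s0 hs.
  by rewrite !mul1r scale1r; apply: grows => //; have := normr_ge0 nu; nra.
set y' := y + s *: (-1 *: nu).
have hy' : `|x0 - y'| + s * `|nu| < r.
  apply: le_lt_trans (lerD (dist_shift _ _ _ s0) (lexx _)) _.
  by rewrite normrZ normrN1 mul1r; lra.
have := grows y' s s0 hy'.
by rewrite /y' -addrA -scalerDr scaleN1r addNr scaler0 addr0 !mulN1r; lra.
Qed.

(* Two points of one side of {psi = 0} are joined by a broken line that first moves
   by S along sg nu, on which sg psi stays positive; hence f does not vanish on it. *)
Lemma same_sign_side (sg : R) : `|sg| = 1 -> forall y1 y2,
  `|x0 - y1| < del -> `|x0 - y2| < del -> 0 < sg * psi y1 -> 0 < sg * psi y2 ->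
  0 < f y1 -> 0 < f y2.
Proof.
move=> sg1; have nu_ge0 := normr_ge0 nu.
have shift_good y s : `|x0 - y| < del -> 0 <= s <= S -> 0 < sg * psi y + c / 2 * s ->
    f (y + s *: (sg *: nu)) != 0 /\ {for y + s *: (sg *: nu), continuous f}.
  move=> /del_ball[yr _] /andP[s0 sS] pos.
  have hs : `|x0 - y| + 2 * s * `|nu| < r.
    have : s * `|nu| <= S * `|nu| by apply: ler_wpM2r.
    have := S_nu; have := normr_ge0 (x0 - y); lra.
  apply: good.
    by apply: le_lt_trans (dist_shift _ _ _ s0) _; rewrite normrZ sg1 mul1r; nra.
  apply: contraTneq pos => pz; rewrite -leNgt.
  by have := signed_psi_grows sg1 s0 hs; rewrite pz mulr0.
apply: pos_transport (fun y => `|x0 - y| < del) _ (S *: (sg *: nu)) _ _ _.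
- by move=> y1 y2 l; exact: ball_convex.
- move=> y By py l /andP[l0 l1]; rewrite scalerA.
  have lS : 0 <= l * S <= S by apply/andP; split; have := S_gt0; nra.
  apply: shift_good => //.
  have : 0 <= c / 2 * (l * S) by apply: mulr_ge0; [have := c_gt0; lra | case/andP: lS].
  lra.
- move=> m Bm; apply: shift_good => //; first by rewrite lexx ltW.
  have : `|sg * psi m| < c * S / 4 by rewrite normrM sg1 mul1r; exact: (del_ball Bm).2.
  rewrite ltr_norml => /andP[pm _].
  have : c / 2 * S = 2 * (c * S / 4) by field.
  have := mulr_gt0 c_gt0 S_gt0; lra.
Qed.
End Ball.

Lemma local_phases (nu1 : dotv nu nu = 1) (f_ray : ray_in [set y | 0 < f y] x0 nu) :
  exists2 del, 0 < del &
   [/\ forall y, `|x0 - y| < del -> O y /\ U y,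
       forall y, `|x0 - y| < del -> 0 < psi y -> 0 < f y &
       (forall y, `|x0 - y| < del -> psi y < 0 -> f y < 0) \/
       (forall y, `|x0 - y| < del -> psi y < 0 -> 0 < f y)].
Proof.
have [r r0 r_ball] := nbhs_norm_ball (normal_slope_near nu1).
have nu_ge0 := normr_ge0 nu.
set S := r / (4 * (`|nu| + 1)).
have S0 : 0 < S by rewrite divr_gt0 //; lra.
have S_nu : S * `|nu| <= r / 4.
  have : S * (4 * (`|nu| + 1)) = r by rewrite divfK //; lra.
  nra.
have dpsi : differentiable psi x0 := (C1psi Ux0).1.
have small : \forall y \near x0, `|x0 - y| < r / 4 /\ `|psi y| < c * S / 4.
  have r4 : 0 < r / 4 by lra.
  near=> y; split; first by near: y; exact: (@nbhs_norm_lt _ V x0 _ r4).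
  rewrite -[psi y]opprK -[- psi y]add0r -psi_x0 normrN; near: y.
  apply: (cvgr_dist_lt _ _ (differentiable_continuous dpsi)).
  by rewrite divr_gt0 // mulr_gt0.
have [del del0 del_ball] := nbhs_norm_ball small.
have same := same_sign_side r_ball S0 S_nu del_ball.
have ball_OU y : `|x0 - y| < del -> O y /\ U y.
  move=> /del_ball[yr _]; have := normr_ge0 (x0 - y).
  by have /r_ball[] : `|x0 - y| < r by lra.
have f_neq0 y : `|x0 - y| < del -> psi y != 0 -> f y != 0.
  by move=> /ball_OU[_ Uy]; apply: contra => /eqP/(zero_psi Uy) ->.
have pos_ray : ray_in [set y | 0 < psi y] x0 nu.
  apply: ray_derive_gt0 psi_x0 _; first exact: diff_derivable.
  by rewrite derive_dotv_grad // grad_psi dotvZl nu1 mulr1.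
have in_ball := ray_nbhs nu (nbhs_norm_lt x0 del0).
have [t [[Bt pt] ft]] := filter_ex (filterI (filterI in_ball pos_ray) f_ray).
have sg_pos : `|1 : R| = 1 by rewrite normr1.
have sg_neg : `|-1 : R| = 1 by rewrite normrN1.
exists del => //; split => [y /ball_OU //|y By py|].
  by apply: (same 1 sg_pos (x0 + t *: nu)) => //; rewrite mul1r.
have [[y0 [B0 p0 f0]]|no_neg] := pselect (exists y, [/\ `|x0 - y| < del, psi y < 0 & f y < 0]).
  left => y By py; rewrite ltNge le_eqVlt eq_sym negb_or f_neq0 ?lt_eqF //=.
  apply/negP => fy; have := same (-1) sg_neg y y0 By B0; rewrite !mulN1r !oppr_gt0.
  by move=> /(_ py p0 fy); lra.
right => y By py; rewrite lt_def f_neq0 ?lt_eqF //= leNgt.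
by apply/negP => fy; apply: no_neg; exists y.
Unshelve. all: by end_near.
Qed.

End LocalPhases.

Section Phases.
Context {R : realType} {n : nat}.
Local Notation V := 'rV[R]_n.

Lemma fpos_ge0 (f : V -> R) x : 0 <= fpos f x.
Proof. by rewrite /fpos; case: ifP. Qed.

Lemma fneg_ge0 (f : V -> R) x : 0 <= fneg f x.
Proof. by rewrite /fneg; case: ifP. Qed.

Lemma fpos0 (f : V -> R) x : f x = 0 -> fpos f x = 0.
Proof. by rewrite /fpos => ->; rewrite ltxx. Qed.

Lemma fneg0 (f : V -> R) x : f x = 0 -> fneg f x = 0.
Proof. by rewrite /fneg => ->; rewrite ltxx. Qed.

Lemma fposE (f : V -> R) x : 0 < f x -> fpos f x = f x.
Proof. by rewrite /fpos => fx; rewrite fx gtr0_norm. Qed.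

Lemma fnegE (f : V -> R) x : f x < 0 -> fneg f x = - f x.
Proof. by rewrite /fneg => fx; rewrite fx ltr0_norm. Qed.

Lemma open_continuous_within (O : set V) (f : V -> R) x : open O ->
  {within closure O, continuous f} -> O x -> {for x, continuous f}.
Proof.
move=> oO /subspace_continuousP fc Ox.
have Ox_int : (closure O)° x.
  by apply: filterS (@subset_closure _ O) _; exact: open_nbhs_nbhs.
by have := fc x (subset_closure Ox); rewrite within_interior.
Qed.

Lemma dotv_nonneg_on_halfspace (G nu : V) : dotv nu nu = 1 ->
  (forall v, 0 < dotv v nu -> 0 <= dotv G v) -> forall v, dotv G v = dotv G nu * dotv nu v.
Proof.
move=> nu1 G_ge0 v; set w := v - dotv nu v *: nu.
have w_nu : dotv w nu = 0 by rewrite /w dotvBl dotvZl nu1 mulr1 dotvC subrr.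
have tangent u : dotv u nu = 0 -> 0 <= dotv G u.
  move=> u_nu.
  have lim : dotv G u + e * dotv G nu @[e --> (0 : R)^'+] --> dotv G u + 0 * dotv G nu.
    by apply: cvgD; [exact: cvg_cst | apply: cvgMl; apply: cvg_at_right_filter; exact: cvg_id].
  suff : 0 <= dotv G u + 0 * dotv G nu by rewrite mul0r addr0.
  apply: ler_cvg_to (cvg_cst 0) lim _.
  near=> e; rewrite -dotvZr -dotvDr; apply: G_ge0.
  rewrite dotvDl u_nu dotvZl nu1 mulr1 add0r.
  by near: e; exact: nbhs_right_gt.
have : dotv G w = 0.
  by apply/eqP; rewrite eq_le tangent // -oppr_ge0 -dotvNr tangent // dotvNl w_nu oppr0.
by rewrite /w dotvBr dotvZr => /eqP; rewrite subr_eq0 mulrC => /eqP.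
Unshelve. all: by end_near.
Qed.

End Phases.

Section BoundaryPhases.
Context {R : realType} {n : nat}.
Local Notation V := 'rV[R]_n.
Variables (O : set V) (f : V -> R) (Gp Gm : V -> V) (x0 nu : V).
Hypotheses (oO : open O) (f_cont : {within closure O, continuous f})
  (Cp : C1_closure (fpos f) (posph O f) Gp) (Cm : C1_closure (fneg f) (negph O f) Gm)
  (Ox0 : O x0) (fx0 : f x0 = 0)
  (normal : normal_into [set y | f y = 0] [set y | 0 < f y] x0 nu).

Let nu1 : dotv nu nu = 1. Proof. by case: normal. Qed.

Lemma boundary_sides :
  (forall v, 0 < dotv v nu -> ray_in (posph O f) x0 v) /\
  ((forall v, dotv v nu < 0 -> ray_in (negph O f) x0 v) \/
   (forall v, dotv v nu < 0 -> ray_in (posph O f) x0 v) /\ ~ closure (negph O f) x0).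
Proof.
case: normal => _ [[psi [U [oU [Ux0 [C1 [zero_psi [c [c0 grad_psi]]]]]]]] f_ray].
have fc x : O x -> {for x, continuous f} by exact: open_continuous_within.
have [del del0 [ball_OU ball_pos ball_neg]] :=
  local_phases oO fc oU Ox0 Ux0 C1 zero_psi c0 grad_psi fx0 nu1 f_ray.
have psi_x0 : psi x0 = 0 := (zero_psi x0 Ux0).1 fx0.
have dpsi : differentiable psi x0 := (C1 x0 Ux0).1.
have D v : 'D_v psi x0 = c * dotv v nu by rewrite derive_dotv_grad // grad_psi dotvZl dotvC.
have in_ball v : ray_in (fun y => `|x0 - y| < del) x0 v := ray_nbhs v (nbhs_norm_lt x0 del0).
have psi_pos v : 0 < dotv v nu -> ray_in [set y | 0 < psi y] x0 v.
  by move=> vnu; apply: ray_derive_gt0 psi_x0 _; [exact: diff_derivable | rewrite D mulr_gt0].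
have psi_neg v : dotv v nu < 0 -> ray_in [set y | psi y < 0] x0 v.
  by move=> vnu; apply: ray_derive_lt0 psi_x0 _; [exact: diff_derivable | rewrite D pmulr_rlt0].
have phase_ray (P Q : set V) v : (forall y, `|x0 - y| < del -> Q y -> P y) ->
    ray_in Q x0 v -> ray_in (O `&` P) x0 v.
  move=> hP; apply: filterS2 (in_ball v) => t By st.
  by split; [exact: (ball_OU _ By).1 | exact: hP].
split=> [v /psi_pos|]; first exact: phase_ray.
case: ball_neg => [neg|pos]; [left|right].
  by move=> v /psi_neg; apply: phase_ray.
split=> [v /psi_neg|]; first by apply: phase_ray.
move=> /(_ _ (nbhs_norm_lt x0 del0))[y [[Oy fy] By]]; have [_ Uy] := ball_OU y By.
case: (ltgtP (psi y) 0) => [/(pos y By)|/(ball_pos y By)|/(zero_psi y Uy).2]; rewrite /=.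
- by move: fy => /=; lra.
- by move: fy => /=; lra.
- by move=> fy0; move: fy; rewrite /= fy0 ltxx.
Qed.

Lemma nder_pos_boundary : 0 <= nder (posph O f) Gp x0 nu /\
  forall v, dotv (Gp x0) v = nder (posph O f) Gp x0 nu * dotv nu v.
Proof.
have [pos_ray _] := boundary_sides.
have Gp_ge0 v : 0 < dotv v nu -> 0 <= dotv (Gp x0) v.
  by move=> /pos_ray rv; exact: ray_slope_ge0 Cp (fpos0 fx0) rv (@fpos_ge0 _ _ f).
have Gp_nu : 0 < dotv nu nu by rewrite nu1.
rewrite /nder asboolT; last exact: ray_closure (pos_ray nu Gp_nu).
by split; [exact: Gp_ge0 | exact: dotv_nonneg_on_halfspace].
Qed.

Lemma nder_neg_boundary v : ray_in (negph O f) x0 v -> nder (negph O f) Gm x0 nu <= 0 /\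
  forall u, dotv (Gm x0) u = nder (negph O f) Gm x0 nu * dotv nu u.
Proof.
move=> rv; rewrite /nder asboolT; last exact: ray_closure rv.
have [_ [neg_ray|[_ not_closure]]] := boundary_sides; last first.
  by case: not_closure; exact: ray_closure rv.
have Gm_ge0 u : 0 < dotv u (- nu) -> 0 <= dotv (Gm x0) u.
  rewrite dotvNr oppr_gt0 => /neg_ray ru.
  exact: ray_slope_ge0 Cm (fneg0 fx0) ru (@fneg_ge0 _ _ f).
have nuN1 : dotv (- nu) (- nu) = 1 by rewrite dotvvN.
have Gm_le0 : dotv (Gm x0) nu <= 0.
  by rewrite -oppr_ge0 -dotvNr; apply: Gm_ge0; rewrite dotvvN nu1.
split => // u.
by rewrite (dotv_nonneg_on_halfspace nuN1 Gm_ge0) dotvNr dotvNl mulrNN.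
Qed.

Lemma nder_neg_le0 : nder (negph O f) Gm x0 nu <= 0.
Proof.
have [_ [neg_ray|[_ not_closure]]] := boundary_sides; last by rewrite /nder asboolF.
by apply: (nder_neg_boundary (neg_ray (- nu) _)).1; rewrite dotvNl nu1 oppr_lt0.
Qed.

Lemma boundary_ray_neg :
  nder (posph O f) Gp x0 nu != 0 \/ nder (negph O f) Gm x0 nu != 0 ->
  ray_in (negph O f) x0 (- nu).
Proof.
move=> nonzero; have [_ [neg_ray|[pos_ray not_closure]]] := boundary_sides.
  by apply: neg_ray; rewrite dotvNl nu1 oppr_lt0.
have [A_ge0 formula] := nder_pos_boundary.
have : 0 <= dotv (Gp x0) (- nu).
  have /pos_ray rv : dotv (- nu) nu < 0 by rewrite dotvNl nu1 oppr_lt0.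
  exact: ray_slope_ge0 Cp (fpos0 fx0) rv (@fpos_ge0 _ _ f).
rewrite formula dotvNr nu1 mulrN1 oppr_ge0 => A_le0.
have neg0 : nder (negph O f) Gm x0 nu = 0 by rewrite /nder asboolF.
have pos0 : nder (posph O f) Gp x0 nu = 0 by apply/eqP; rewrite eq_le A_le0 A_ge0.
by move: nonzero; rewrite pos0 neg0 eqxx; case.
Qed.

End BoundaryPhases.

Section SecondDerivative.
Context {R : realType} {n : nat}.
Local Notation V := 'rV[R]_n.

Lemma min_second_derive_ge0 (h k : R -> R) (K : R) :
  (\forall s \near 0, is_derive s (1 : R) h (k s)) -> (\forall s \near 0, h 0 <= h s) ->
  s^-1 * (k s - k 0) @[s --> 0^'] --> K -> 0 <= K.
Proof.
move=> hk hmin kK.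
have [d d0 near_d] : exists2 d : R, 0 < d &
    forall s : R, s \in `]- d, d[ -> is_derive s (1 : R) h (k s) /\ h 0 <= h s.
  have [d d0 hd] := nbhs_norm_ball (filterI hk hmin).
  by exists d => // s; rewrite in_itv /= => sd; apply: hd; rewrite sub0r normrN ltr_norml.
(* Fermat gives k 0 = 0; if K < 0 then k < 0 right of 0 and h would decrease. *)
have k0 : k 0 = 0.
  have min0 : is_derive 0 (1 : R) h 0.
    apply: (derive1_at_min (a := - d) (b := d)) => [|s /near_d[hs _]||s /near_d[]//].
    - by rewrite ge0_cp // ltW.
    - exact: ex_derive.
    - by rewrite in_itv /= oppr_lt0 d0.
  have [hk0 _] : is_derive 0 (1 : R) h (k 0) /\ h 0 <= h 0.
    by apply: near_d; rewrite in_itv /= oppr_lt0 d0.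
  by rewrite -[k 0]derive_val; exact: derive_val.
rewrite leNgt; apply/negP => K0.
have [e e0 k_neg] := near_at_right_itv (cvgr_lt _ (cvg_dnbhs_at_right kK) 0 K0).
set t := Num.min d e / 2.
have [t0 td te] : [/\ 0 < t, t < d & t < e].
  have : Num.min d e <= d by rewrite ge_min lexx.
  have : Num.min d e <= e by rewrite ge_min lexx orbT.
  have : 0 < Num.min d e by rewrite lt_min d0 e0.
  by rewrite /t; split; lra.
have in_d s : 0 <= s <= t -> s \in `]- d, d[.
  by move=> /andP[s0 st]; rewrite in_itv /=; apply/andP; split; lra.
have cont : {within `[0, t], continuous h}.
  apply: continuous_in_subspaceT => s; rewrite inE /= in_itv /= => /in_d /near_d[hs _].
  exact/differentiable_continuous/derivable1_diffP/ex_derive.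
have [c] := MVT t0 (fun s hs => (near_d s (in_d s (subset_itv_oo_cc hs))).1) cont.
rewrite in_itv /= => /andP[c0 ct]; rewrite subr0 => E.
have /k_neg : 0 < c < e by rewrite c0 /=; lra.
rewrite k0 subr0 pmulr_rlt0 ?invr_gt0 // => kc.
have /near_d[_ ht] : t \in `]- d, d[ by apply: in_d; rewrite lexx ltW.
nra.
Qed.

Lemma second_derive_le (u v : V -> R) (x e : V) :
  (\forall y \near x, v y <= u y) -> u x = v x ->
  (\forall y \near x, derivable u y e) -> (\forall y \near x, derivable v y e) ->
  derivable ('D_e u) x e -> derivable ('D_e v) x e ->
  'D_e ('D_e v) x <= 'D_e ('D_e u) x.
Proof.
move=> vu uv du dv ddu ddv; rewrite -subr_ge0.
pose k s := 'D_e u (x + s *: e) - 'D_e v (x + s *: e).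
apply: (@min_second_derive_ge0 (fun s => u (x + s *: e) - v (x + s *: e)) k).
- apply: filterS (near_line e (filterI du dv)) => s [dus dvs].
  exact: is_deriveB (is_derive_line dus) (is_derive_line dvs).
- apply: filterS (near_line e vu) => s /=.
  by rewrite scale0r addr0 uv subrr subr_ge0.
have qu : (fun s : R => s^-1 *: (('D_e u \o shift x) (s *: e) - 'D_e u x))
    @ 0^' --> 'D_e ('D_e u) x := ddu.
have qv : (fun s : R => s^-1 *: (('D_e v \o shift x) (s *: e) - 'D_e v x))
    @ 0^' --> 'D_e ('D_e v) x := ddv.
suff -> : (fun s => s^-1 * (k s - k 0)) =
    (fun s : R => s^-1 *: (('D_e u \o shift x) (s *: e) - 'D_e u x)) -
    (fun s : R => s^-1 *: (('D_e v \o shift x) (s *: e) - 'D_e v x)) by exact: cvgB qu qv.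
apply: funext => s; rewrite /k /= scale0r addr0.
rewrite -[(_ - _) s]/(_ - _) -scalerBr ![s *: e + x]addrC; congr (_ *: _); ring.
Qed.

Lemma lap_le_of_touching (u v : V -> R) (x : V) : has_lap u x -> has_lap v x ->
  (\forall y \near x, v y <= u y) -> u x = v x -> lap v x <= lap u x.
Proof.
move=> hu hv vu uv; apply: ler_sum => i _.
exact: second_derive_le vu uv (hu i).1 (hv i).1 (hu i).2 (hv i).2.
Qed.

Lemma C2_on_has_lap (w : V -> R) (A : set V) (x : V) :
  C2_on w A -> (\forall y \near x, A y) -> has_lap w x.
Proof.
move=> [C1 C2] nA i; split.
  by apply: filterS nA => y Ay; apply: diff_derivable; exact: (C1 y Ay).1.
by apply: diff_derivable; exact: (C2 i x (nbhs_singleton nA)).1.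
Qed.

Lemma phases_has_lap (O : set V) (w : V -> R) (x : V) : open O ->
  {within closure O, continuous w} -> C2_on w (posph O w) -> C2_on w (negph O w) ->
  O x -> w x != 0 -> has_lap w x.
Proof.
move=> oO wc C2p C2n Ox wx; have wcx := open_continuous_within oO wc Ox.
have nO : \forall y \near x, O y by exact: open_nbhs_nbhs.
case: (ltgtP (w x) 0) => [wneg|wpos|w0]; last by rewrite w0 eqxx in wx.
  by apply: C2_on_has_lap C2n _; apply: filterI nO (cvgr_lt _ wcx 0 wneg).
by apply: C2_on_has_lap C2p _; apply: filterI nO (cvgr_gt _ wcx 0 wpos).
Qed.

End SecondDerivative.

Section Touching.
Context {R : realType} {n : nat}.
Local Notation V := 'rV[R]_n.

Lemma fpos_slope_le (O : set V) (f1 f2 : V -> R) (G1 G2 : V -> V) (x v : V) :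
  C1_closure (fpos f1) (posph O f1) G1 -> C1_closure (fpos f2) (posph O f2) G2 ->
  f1 x = 0 -> f2 x = 0 -> (forall y, O y -> f1 y <= f2 y) ->
  ray_in (posph O f1) x v -> dotv (G1 x) v <= dotv (G2 x) v.
Proof.
move=> C1 C2 f1x f2x f12 rv.
have pos12 y : posph O f1 y -> 0 < f2 y by move=> [Oy f1y]; exact: lt_le_trans f1y (f12 y Oy).
apply: ray_slope_le C1 C2 (fpos0 f1x) (fpos0 f2x) rv _ _.
  by move=> y /[dup] [[Oy _]] /pos12.
by move=> y /[dup] [[Oy f1y]] /pos12 f2y; rewrite (fposE f1y) (fposE f2y) f12.
Qed.

Lemma fneg_slope_le (O : set V) (f1 f2 : V -> R) (G1 G2 : V -> V) (x v : V) :
  C1_closure (fneg f1) (negph O f1) G1 -> C1_closure (fneg f2) (negph O f2) G2 ->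
  f1 x = 0 -> f2 x = 0 -> (forall y, O y -> f1 y <= f2 y) ->
  ray_in (negph O f2) x v -> dotv (G2 x) v <= dotv (G1 x) v.
Proof.
move=> C1 C2 f1x f2x f12 rv.
have neg21 y : negph O f2 y -> f1 y < 0 by move=> [Oy f2y]; exact: le_lt_trans (f12 y Oy) f2y.
apply: ray_slope_le C2 C1 (fneg0 f2x) (fneg0 f1x) rv _ _.
  by move=> y /[dup] [[Oy _]] /neg21.
by move=> y /[dup] [[Oy f2y]] /neg21 f1y; rewrite (fnegE f1y) (fnegE f2y) lerN2 f12.
Qed.

Variables (g : V -> R) (O : set V) (w z : V -> R) (x : V).
Hypotheses (oO : open O) (gx : 0 < g x) (w_sol : is_solution g O w)
  (Ox : O x) (wx : w x = 0) (zx : z x = 0).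

Lemma subsolution_boundary_touch :
  is_strict_subsolution g O z -> ~ (forall y, closure O y -> z y <= w y).
Proof.
case: w_sol => wc [_ [_ [_ [Gpw [Gmw [Cpw [Cmw fbw]]]]]]].
move=> [zc [_ [_ [Gpz [Gmz [Cpz [Cmz fbz]]]]]]] zw_cl.
have zw y : O y -> z y <= w y by move=> /subset_closure /zw_cl.
have [nuw [nw cw]] := fbw x Ox wx; have [nuz [nz cz]] := fbz x Ox zx.
have [[nuw1 _] [nuz1 _]] := (nw, nz).
have [Aw_ge0 Gpw_eq] := nder_pos_boundary oO wc Cpw Ox wx nw.
have [Az_ge0 Gpz_eq] := nder_pos_boundary oO zc Cpz Ox zx nz.
have Bz_le0 := nder_neg_le0 oO zc Cmz Ox zx nz.
set Aw := nder _ Gpw x nuw in cw Aw_ge0 Gpw_eq.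
set Bw := nder _ Gmw x nuw in cw.
set Az := nder _ Gpz x nuz in cz Az_ge0 Gpz_eq.
set Bz := nder _ Gmz x nuz in cz Bz_le0.
have p_le1 := dotv_unit_le1 nuz1 nuw1; set p := dotv nuz nuw in p_le1.
have pos_cmp : Az <= Aw * p.
  have [pos_z _] := boundary_sides oO zc Ox zx nz.
  have rz : ray_in (posph O z) x nuz by apply: pos_z; rewrite nuz1.
  have := fpos_slope_le Cpz Cpw zx wx zw rz.
  by rewrite Gpz_eq Gpw_eq nuz1 mulr1 (dotvC nuw).
have Aw_gt0 : 0 < Aw.
  have Az_gt0 : 0 < Az by rewrite -(pmulr_rgt0 _ gx); lra.
  by apply: lt_le_trans Az_gt0 (le_trans pos_cmp _); rewrite ler_piMr.
have neg_w := boundary_ray_neg (Gm := Gmw) oO wc Cpw Ox wx nw (or_introl (lt0r_neq0 Aw_gt0)).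
have neg_wz : forall y, negph O w y -> negph O z y.
  by move=> y [Oy wy]; split => //; exact: le_lt_trans (zw _ Oy) wy.
have neg_z := ray_inS neg_wz neg_w.
have neg_cmp : - Bw <= - (Bz * p).
  have := fneg_slope_le Cmz Cmw zx wx zw neg_w.
  rewrite (nder_neg_boundary oO wc Cmw Ox wx nw neg_w).2.
  by rewrite (nder_neg_boundary oO zc Cmz Ox zx nz neg_z).2 !dotvNr nuw1 mulrN1 mulrN.
have : g x * Az <= g x * (Aw * p) by rewrite ler_pM2l.
have : g x * (Aw * p) <= g x * Aw by rewrite ler_pM2l // ler_piMr // ltW.
have : - (Bz * p) <= - Bz by rewrite -mulNr ler_piMr // oppr_ge0.
lra.
Qed.

Lemma supersolution_boundary_touch :
  is_strict_supersolution g O z -> ~ (forall y, closure O y -> w y <= z y).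
Proof.
case: w_sol => wc [_ [_ [_ [Gpw [Gmw [Cpw [Cmw fbw]]]]]]].
move=> [zc [_ [_ [Gpz [Gmz [Cpz [Cmz fbz]]]]]]] wz_cl.
have wz y : O y -> w y <= z y by move=> /subset_closure /wz_cl.
have [nuw [nw cw]] := fbw x Ox wx; have [nuz [nz cz]] := fbz x Ox zx.
have [[nuw1 _] [nuz1 _]] := (nw, nz).
have [Aw_ge0 Gpw_eq] := nder_pos_boundary oO wc Cpw Ox wx nw.
have [Az_ge0 Gpz_eq] := nder_pos_boundary oO zc Cpz Ox zx nz.
have Bw_le0 := nder_neg_le0 oO wc Cmw Ox wx nw.
set Aw := nder _ Gpw x nuw in cw Aw_ge0 Gpw_eq.
set Bw := nder _ Gmw x nuw in cw Bw_le0.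
set Az := nder _ Gpz x nuz in cz Az_ge0 Gpz_eq.
set Bz := nder _ Gmz x nuz in cz.
have p_le1 := dotv_unit_le1 nuw1 nuz1; set p := dotv nuw nuz in p_le1.
have Bz_lt0 : Bz < 0 by have := mulr_ge0 (ltW gx) Az_ge0; lra.
have neg_z := boundary_ray_neg (Gm := Gmz) oO zc Cpz Ox zx nz (or_intror (ltr0_neq0 Bz_lt0)).
have neg_zw : forall y, negph O z y -> negph O w y.
  by move=> y [Oy zy]; split => //; exact: le_lt_trans (wz _ Oy) zy.
have neg_w := ray_inS neg_zw neg_z.
have neg_cmp : - Bz <= - (Bw * p).
  have := fneg_slope_le Cmw Cmz wx zx wz neg_z.
  rewrite (nder_neg_boundary oO zc Cmz Ox zx nz neg_z).2.
  by rewrite (nder_neg_boundary oO wc Cmw Ox wx nw neg_w).2 !dotvNr nuz1 mulrN1 mulrN.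
have pos_cmp : Aw <= Az * p.
  have [pos_w _] := boundary_sides oO wc Ox wx nw.
  have rw : ray_in (posph O w) x nuw by apply: pos_w; rewrite nuw1.
  have := fpos_slope_le Cpw Cpz wx zx wz rw.
  by rewrite Gpw_eq Gpz_eq nuw1 mulr1 (dotvC nuz).
have : g x * Aw <= g x * (Az * p) by rewrite ler_pM2l.
have : g x * (Az * p) <= g x * Az by rewrite ler_pM2l // ler_piMr.
have : - (Bw * p) <= - Bw by rewrite -mulNr ler_piMr // oppr_ge0.
lra.
Qed.

End Touching.

Section InteriorTouching.
Context {R : realType} {n : nat}.
Local Notation V := 'rV[R]_n.
Variables (g : V -> R) (O : set V) (w z : V -> R) (x : V).
Hypotheses (oO : open O) (w_sol : is_solution g O w) (Ox : O x) (zx : z x != 0).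

Let near_closure : \forall y \near x, closure O y.
Proof. by apply: filterS (@subset_closure _ O) _; exact: open_nbhs_nbhs. Qed.

Let w_lap : z x = w x -> has_lap w x /\ lap w x = 0.
Proof.
case: w_sol => wc [C2p [C2n [lapw _]]] zwx.
have wx : w x != 0 by rewrite -zwx.
by split; [exact: phases_has_lap oO wc C2p C2n Ox wx | exact: lapw].
Qed.

Lemma subsolution_interior_touch : is_strict_subsolution g O z -> z x = w x ->
  ~ (forall y, closure O y -> z y <= w y).
Proof.
move=> [_ [_ [/(_ x Ox zx)[hz lz] _]]] zwx zw; have [hw lw] := w_lap zwx.
have : lap z x <= lap w x.
  exact: lap_le_of_touching hw hz (filterS zw near_closure) (esym zwx).
by rewrite lw leNgt lz.
Qed.

Lemma supersolution_interior_touch : is_strict_supersolution g O z -> z x = w x ->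
  ~ (forall y, closure O y -> w y <= z y).
Proof.
move=> [_ [_ [/(_ x Ox zx)[hz lz] _]]] zwx wz; have [hw lw] := w_lap zwx.
have : lap w x <= lap z x.
  exact: lap_le_of_touching hz hw (filterS wz near_closure) zwx.
by rewrite lw leNgt lz.
Qed.

End InteriorTouching.

Unset Implicit Arguments.

Theorem lemma7p7 (R : realType) (n : nat) (O : set 'rV[R]_n)
    (g : 'rV[R]_n -> R) :
  open O -> (forall x, 0 < g x) ->
  (forall w z : 'rV[R]_n -> R,
     is_solution g O w -> is_strict_subsolution g O z ->
     {within closure O, continuous w} -> {within closure O, continuous z} ->
     (forall x, closure O x -> z x <= w x) ->
     forall x, O x -> z x < w x) /\
  (forall w z : 'rV[R]_n -> R,
     is_solution g O w -> is_strict_supersolution g O z ->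
     {within closure O, continuous w} -> {within closure O, continuous z} ->
     (forall x, closure O x -> w x <= z x) ->
     forall x, O x -> w x < z x).
Proof.
move=> oO gpos; split=> w z w_sol z_sol _ _ le_wz x Ox;
  rewrite lt_neqAle le_wz ?andbT; try exact: subset_closure; apply/negP => /eqP.
- move=> zwx; have [zx0|zx] := eqVneq (z x) 0.
    have wx0 : w x = 0 by rewrite -zwx.
    exact: subsolution_boundary_touch oO (gpos x) w_sol Ox wx0 zx0 z_sol le_wz.
  exact: subsolution_interior_touch oO w_sol Ox zx z_sol zwx le_wz.
- move=> wzx; have [zx0|zx] := eqVneq (z x) 0.
    have wx0 : w x = 0 by rewrite wzx.
    exact: supersolution_boundary_touch oO (gpos x) w_sol Ox wx0 zx0 z_sol le_wz.
  exact: supersolution_interior_touch oO w_sol Ox zx z_sol (esym wzx) le_wz.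
Qed.
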